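(* Let $X$ be a Hausdorff countably compact space with a point-countable Pytkeev network. Then $X$ is a compact metrizable space. *)

From Stdlib Require Import Reals List.
Open Scope R_scope.

Definition set (X : Type) := X -> Prop.

Record topology (X : Type) : Type := {
  is_open : set X -> Prop;
  open_full : is_open (fun _ => True);
  open_inter : forall U V, is_open U -> is_open V ->
                 is_open (fun x => U x /\ V x);
  open_union : forall (F : set X -> Prop),
                 (forall U, F U -> is_open U) ->
                 is_open (fun x => exists U, F U /\ U x)
}.
Arguments is_open {X} t U.

Definition finite_set {X : Type} (A : set X) : Prop :=
  exists l : list X, forall x, A x -> In x l.

Definition infinite_set {X : Type} (A : set X) : Prop := ~ finite_set A.

Definition countable_family {X : Type} (F : set X -> Prop) : Prop :=
  exists f : nat -> set X, forall N, F N -> exists n, f n = N.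

Definition top_closure {X : Type} (t : topology X) (A : set X) : set X :=
  fun x => forall U, is_open t U -> U x -> exists y, U y /\ A y.

Definition hausdorff {X : Type} (t : topology X) : Prop :=
  forall x y : X, x <> y -> exists U V, is_open t U /\ is_open t V /\
    U x /\ V y /\ (forall z, ~ (U z /\ V z)).

Definition top_compact {X : Type} (t : topology X) : Prop :=
  forall (I : Type) (U : I -> set X),
    (forall i, is_open t (U i)) -> (forall x, exists i, U i x) ->
    exists l : list I, forall x, exists i, In i l /\ U i x.

Definition countably_compact {X : Type} (t : topology X) : Prop :=
  forall U : nat -> set X,
    (forall n, is_open t (U n)) -> (forall x, exists n, U n x) ->
    exists m, forall x, exists n, (n <= m)%nat /\ U n x.

Definition network_at {X : Type} (t : topology X) (N : set X -> Prop) (x : X) :=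
  forall O, is_open t O -> O x -> exists P, N P /\ P x /\ (forall z, P z -> O z).

Definition pytkeev_network_at {X : Type} (t : topology X)
    (N : set X -> Prop) (x : X) : Prop :=
  network_at t N x /\
  forall O (A : set X), is_open t O -> O x -> top_closure t A x -> ~ A x ->
    exists P, N P /\ (forall z, P z -> O z) /\
      infinite_set (fun z => P z /\ A z).

Definition pytkeev_network {X : Type} (t : topology X) (N : set X -> Prop) :=
  forall x, pytkeev_network_at t N x.

Definition point_countable {X : Type} (N : set X -> Prop) : Prop :=
  forall x, countable_family (fun P => N P /\ P x).

Definition is_metric {X : Type} (d : X -> X -> R) : Prop :=
  (forall x y, 0 <= d x y) /\ (forall x y, d x y = 0 <-> x = y) /\
  (forall x y, d x y = d y x) /\ (forall x y z, d x z <= d x y + d y z).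

Definition metric_open {X : Type} (d : X -> X -> R) (U : set X) : Prop :=
  forall x, U x -> exists eps, 0 < eps /\ forall y, d x y < eps -> U y.

Definition metrizable {X : Type} (t : topology X) : Prop :=
  exists d : X -> X -> R, is_metric d /\
    forall U, is_open t U <-> metric_open d U.

(* If an open cover had no finite refinement by members of the point-countable
   Pytkeev network N, a sequence escaping ever larger finite subfamilies would
   accumulate, by countable compactness, at a point where the Pytkeev property
   fails. So X is compact, and by Mishchenko's lemma (a point-countable family
   has only countably many minimal finite covers) these refinements yield a
   countable network. A compact Hausdorff space with a countable network has
   countably many Urysohn functions separating its points, and the supremum of
   their weighted differences is a metric inducing the topology. *)

From Stdlib Require Import Reals List Lia Lra Classical ClassicalEpsilon
  FunctionalExtensionality PropExtensionality Cantor.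
Import ListNotations.
Open Scope R_scope.

Definition covers {X : Type} (L : list (set X)) (z : X) : Prop :=
  exists P, In P L /\ P z.

Lemma list_choice {A B : Type} (R : A -> B -> Prop) (l : list A) :
  (forall a, In a l -> exists b, R a b) ->
  exists l' : list B, forall a, In a l -> exists b, In b l' /\ R a b.
Proof.
  induction l as [|a l IH]; intros Hl.
  - exists []. intros a [].
  - destruct (Hl a (or_introl eq_refl)) as [b Hb].
    destruct IH as [l' Hl']; [intros a' Ha'; apply Hl; right; exact Ha'|].
    exists (b :: l'). intros a' [<-|Ha'].
    + exists b. split; [left|]; auto.
    + destruct (Hl' a' Ha') as [b' [Hb' HR]]. exists b'. split; [right|]; auto.
Qed.

Lemma list_filter_members {A : Type} (Q : A -> Prop) (l : list A) :
  exists l', (forall a, In a l' -> Q a) /\ (forall a, In a l -> Q a -> In a l').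
Proof.
  induction l as [|a l [l' [H1 H2]]].
  - exists []. split; intros a [].
  - destruct (classic (Q a)) as [Ha|Ha].
    + exists (a :: l'). split; [intros b [<-|Hb]; auto|].
      intros b [<-|Hb] Qb; [left|right]; auto.
    + exists l'. split; auto. intros b [<-|Hb] Qb; [contradiction|auto].
Qed.

Section Topology.
Context {X : Type} (t : topology X).

Lemma open_ext (A B : set X) : (forall x, A x <-> B x) -> is_open t A -> is_open t B.
Proof.
  intros H HA. replace B with A; auto.
  extensionality x. apply propositional_extensionality. apply H.
Qed.

Lemma open_empty : is_open t (fun _ => False).
Proof.
  eapply open_ext; [|apply (open_union _ t (fun _ => False))]; [|intros U []].
  intros x; split; [intros [U [[] _]]|intros []].
Qed.

Lemma open_or (U V : set X) :
  is_open t U -> is_open t V -> is_open t (fun x => U x \/ V x).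
Proof.
  intros HU HV.
  eapply open_ext; [|apply (open_union _ t (fun W => W = U \/ W = V))].
  - intros x; split; [intros [W [[->| ->] HW]]; auto|intros [H|H]; eauto].
  - intros W [->| ->]; auto.
Qed.

Lemma open_finite_inter {I : Type} (l : list I) (U : I -> set X) :
  (forall i, is_open t (U i)) -> is_open t (fun z => forall i, In i l -> U i z).
Proof.
  intros HU. induction l as [|a l IH].
  - eapply open_ext; [|apply (open_full _ t)]. intros z; split; [intros _ i []|auto].
  - eapply open_ext; [|apply (open_inter _ t _ _ (HU a) IH)].
    intros z; split; [intros [H1 H2] i [<-|Hi]; auto|].
    intros H; split; [apply H; left|intros i Hi; apply H; right]; auto.
Qed.

Lemma open_finite_union {I : Type} (l : list I) (U : I -> set X) :
  (forall i, is_open t (U i)) -> is_open t (fun z => exists i, In i l /\ U i z).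
Proof.
  intros HU.
  eapply open_ext; [|apply (open_union _ t (fun V => exists i, In i l /\ V = U i))].
  - intros z; split; [intros [V [[i [Hi ->]] Hz]]; eauto|].
    intros [i [Hi Hz]]. exists (U i). eauto.
  - intros V [i [_ ->]]; auto.
Qed.

Lemma subset_closure (A : set X) x : A x -> top_closure t A x.
Proof. intros Hx U _ HU. exists x; auto. Qed.

Lemma closure_mono (A B : set X) :
  (forall z, A z -> B z) -> forall x, top_closure t A x -> top_closure t B x.
Proof.
  intros H x Hx U HU HUx. destruct (Hx U HU HUx) as [y [Hy1 Hy2]]. eauto.
Qed.

Lemma closure_idem (A : set X) x : top_closure t (top_closure t A) x -> top_closure t A x.
Proof.
  intros Hx U HU HUx. destruct (Hx U HU HUx) as [w [HUw Hw]]. exact (Hw U HU HUw).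
Qed.

Lemma not_closure_of_open_disjoint (A U : set X) :
  is_open t U -> (forall z, U z -> ~ A z) -> forall x, U x -> ~ top_closure t A x.
Proof.
  intros HU H x Hx Hc. destruct (Hc U HU Hx) as [y [Hy1 Hy2]]. exact (H y Hy1 Hy2).
Qed.

Lemma open_compl_closure (A : set X) : is_open t (fun x => ~ top_closure t A x).
Proof.
  eapply open_ext;
    [|apply (open_union _ t (fun U => is_open t U /\ forall z, U z -> ~ A z))];
    [|intros U [H _]; auto].
  intros x; split.
  - intros [U [[HU HUA] HUx]]. exact (not_closure_of_open_disjoint A U HU HUA x HUx).
  - intros Hx. apply not_all_ex_not in Hx as [U HU].
    apply imply_to_and in HU as [HUo HU]. apply imply_to_and in HU as [HUx HU].
    exists U. repeat split; auto. intros z Hz HAz. apply HU. exists z; auto.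
Qed.

(* Otherwise the complements of the closures of the tails of [s] would form a
   countable open cover without finite subcover. *)
Lemma countably_compact_accumulation (s : nat -> X) :
  countably_compact t ->
  (forall i, exists m, forall n, (m <= n)%nat -> s n <> s i) ->
  exists y, top_closure t (fun z => (exists n, z = s n) /\ z <> y) y.
Proof.
  intros Hcc Hs. apply NNPP. intros Hno.
  set (tail := fun m (z : X) => exists n, (m <= n)%nat /\ z = s n).
  destruct (Hcc (fun m y => ~ top_closure t (tail m) y)) as [M HM].
  - intros m; apply open_compl_closure.
  - intros y. apply NNPP. intros Hy. apply Hno. exists y. intros U HU HUy.
    assert (Hall : forall m, top_closure t (tail m) y).
    { intros m. apply NNPP. intros Hm. apply Hy. eauto. }
    destruct (Hall 0%nat U HU HUy) as [z [Hz [k [_ ->]]]].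
    destruct (classic (s k = y)) as [Hky|Hky].
    + destruct (Hs k) as [m Hm].
      destruct (Hall m U HU HUy) as [z [Hz' [k' [Hk' ->]]]].
      exists (s k'). split; [|split]; eauto. rewrite <- Hky. apply Hm; auto.
    + exists (s k). split; [|split]; eauto.
  - destruct (HM (s M)) as [n [Hn Hc]]. apply Hc, subset_closure. exists M; auto.
Qed.

End Topology.

Lemma seq_from_history {X : Type} (R : list X -> X -> Prop) :
  (forall h, exists x, R h x) -> exists s : nat -> X, forall n, R (map s (seq 0 n)) (s n).
Proof.
  intros H. destruct (choice R H) as [next Hnext].
  pose (hist := fix hist (n : nat) : list X :=
          match n with O => [] | S m => hist m ++ [next (hist m)] end).
  exists (fun n => next (hist n)).
  assert (Hh : forall n, hist n = map (fun n => next (hist n)) (seq 0 n)).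
  { induction n; auto. rewrite seq_S, map_app, <- IHn. reflexivity. }
  intros n. rewrite <- Hh. apply Hnext.
Qed.

Section PytkeevSubcover.
Context {X : Type} (t : topology X) (Q : set X -> Prop).
Hypothesis countably_compact_t : countably_compact t.
Hypothesis point_countable_Q : point_countable Q.
Hypothesis Q_covers : forall x, exists P, Q P /\ P x.
Hypothesis Q_pytkeev : forall y (A : set X), top_closure t A y -> ~ A y ->
  exists P, Q P /\ infinite_set (fun z => P z /\ A z).

Lemma escaping_sequence (enum : X -> nat -> set X) :
  ~ (exists F, (forall P, In P F -> Q P) /\ forall x, covers F x) ->
  exists s : nat -> X, forall i j n, (i < n)%nat -> (j < n)%nat ->
    Q (enum (s i) j) -> ~ enum (s i) j (s n).
Proof.
  intros Hno.
  pose (early := fun h : list X => flat_map (fun p => map (enum p) (seq 0 (length h))) h).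
  assert (Hescape : forall h, exists x, forall P, In P (early h) -> Q P -> ~ P x).
  { intros h. destruct (list_filter_members Q (early h)) as [F [HFQ HF]].
    apply NNPP; intro Hc; apply Hno; exists F; split; auto.
    intros z. apply NNPP; intro Hz; apply Hc; exists z; intros P HP HQP HPz.
    apply Hz; exists P; auto. }
  destruct (seq_from_history _ Hescape) as [s Hs].
  exists s. intros i j n Hi Hj. apply (Hs n). apply in_flat_map. exists (s i).
  rewrite length_map, length_seq. split; apply in_map, in_seq; lia.
Qed.

(* A member of [Q] through some [s m] is enumerated at [s m], so it contains
   only finitely many points of an escaping sequence; at an accumulation point
   this contradicts the Pytkeev property. *)
Lemma pytkeev_finite_subcover :
  exists F, (forall P, In P F -> Q P) /\ forall x, covers F x.
Proof.
  apply NNPP; intro Hno.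
  destruct (choice _ point_countable_Q) as [enum Henum].
  destruct (escaping_sequence enum Hno) as [s Hs].
  assert (eventually_outside : forall m P, Q P -> P (s m) ->
            exists k, forall n, (k <= n)%nat -> ~ P (s n)).
  { intros m P HP Hm. destruct (Henum (s m) P (conj HP Hm)) as [j <-].
    exists (S (max m j)). intros n Hn. apply Hs; auto; lia. }
  destruct (countably_compact_accumulation t s countably_compact_t) as [y Hy].
  { intros i. destruct (Q_covers (s i)) as [P [HP HPi]].
    destruct (eventually_outside i P HP HPi) as [k Hk].
    exists k. intros n Hn Heq. apply (Hk n Hn). rewrite Heq. exact HPi. }
  destruct (Q_pytkeev y _ Hy) as [P [HP Hinf]]; [intros [_ H]; auto|].
  apply Hinf.
  destruct (classic (exists m, P (s m))) as [[m Hm] | Hne].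
  - destruct (eventually_outside m P HP Hm) as [k Hk].
    exists (map s (seq 0 k)). intros z [Hz [[n ->] _]].
    destruct (Compare_dec.le_lt_dec k n) as [Hkn|Hnk].
    + exfalso. exact (Hk n Hkn Hz).
    + apply in_map, in_seq; lia.
  - exists []. intros z [Hz [[n ->] _]]. apply Hne; eauto.
Qed.

End PytkeevSubcover.

Lemma pytkeev_refinement {X : Type} (t : topology X) (N G : set X -> Prop) :
  countably_compact t -> point_countable N -> pytkeev_network t N ->
  (forall V, G V -> is_open t V) -> (forall x, exists V, G V /\ V x) ->
  exists F, (forall P, In P F -> N P /\ exists V, G V /\ forall z, P z -> V z) /\
    forall x, covers F x.
Proof.
  intros Hcc Hpc Hpyt HG HGcov. apply (pytkeev_finite_subcover t); auto.
  - intros x. destruct (Hpc x) as [f Hf].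
    exists f. intros P [[HP _] HPx]. apply Hf; auto.
  - intros x. destruct (HGcov x) as [V [HV HVx]].
    destruct (proj1 (Hpyt x) V (HG V HV) HVx) as [P [HP [HPx HPV]]]; eauto 6.
  - intros y A Hy HAy. destruct (HGcov y) as [V [HV HVy]].
    destruct (proj2 (Hpyt y) V A (HG V HV) HVy Hy HAy) as [P [HP [HPV Hinf]]]; eauto 6.
Qed.

Lemma compact_of_pytkeev {X : Type} (t : topology X) (N : set X -> Prop) :
  countably_compact t -> point_countable N -> pytkeev_network t N -> top_compact t.
Proof.
  intros Hcc Hpc Hpyt I U HU HUcov.
  destruct (pytkeev_refinement t N (fun V => exists i, V = U i) Hcc Hpc Hpyt)
    as [F [HF Fcov]].
  - intros V [i ->]; auto.
  - intros x. destruct (HUcov x) as [i Hi]. eauto.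
  - destruct (list_choice (fun P i => forall z, P z -> U i z) F) as [l Hl].
    { intros P HPF. destruct (HF P HPF) as [_ [V [[i ->] HPV]]]. eauto. }
    exists l. intros x. destruct (Fcov x) as [P [HPF HPx]].
    destruct (Hl P HPF) as [i [Hi HPi]]. eauto.
Qed.

Fixpoint nat_of_list (l : list nat) : nat :=
  match l with [] => O | a :: l' => S (to_nat (a, nat_of_list l')) end.

Fixpoint list_of_nat_fuel (fuel n : nat) : list nat :=
  match fuel, n with
  | S fuel', S m => fst (of_nat m) :: list_of_nat_fuel fuel' (snd (of_nat m))
  | _, _ => []
  end.

Definition list_of_nat (n : nat) : list nat := list_of_nat_fuel n n.

Lemma list_of_nat_fuel_of_list l fuel :
  (nat_of_list l <= fuel)%nat -> list_of_nat_fuel fuel (nat_of_list l) = l.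
Proof.
  revert fuel. induction l as [|a l IH]; intros [|fuel] Hf; cbn [nat_of_list] in *;
    try lia; auto.
  cbn [list_of_nat_fuel]. rewrite cancel_of_to. cbn [fst snd]. f_equal. apply IH.
  pose proof (to_nat_non_decreasing a (nat_of_list l)). lia.
Qed.

Lemma list_of_nat_of_list l : list_of_nat (nat_of_list l) = l.
Proof. apply list_of_nat_fuel_of_list; auto. Qed.

Section GrowCover.
Context {X : Type} (x0 : X) (enum : X -> nat -> set X).

(* Junk when [L] already covers everything. *)
Definition uncovered_point (L : list (set X)) : X :=
  epsilon (inhabits x0) (fun z => ~ covers L z).

Definition grow_cover (acc : list (set X)) (l : list nat) : list (set X) :=
  fold_left (fun acc n => acc ++ [enum (uncovered_point acc) n]) l acc.

Lemma grow_cover_reaches (N : set X -> Prop) :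
  (forall p P, N P -> P p -> exists j, enum p j = P) ->
  forall k (F acc : list (set X)), (length F <= k)%nat -> (forall P, In P F -> N P) ->
  (forall z, ~ covers acc z -> covers F z) ->
  exists l, (forall z, covers (grow_cover acc l) z) /\
            (forall P, In P (grow_cover acc l) -> In P acc \/ In P F).
Proof.
  intros Henum k. induction k as [|k IH]; intros F acc HF HN Hcov.
  - destruct F; [|simpl in HF; lia].
    exists []. split; [|auto]. intros z. apply NNPP; intro Hz.
    destruct (Hcov z Hz) as [Q [[] _]].
  - destruct (classic (forall z, covers acc z)) as [Hall|Hnot]; [exists []; auto|].
    apply not_all_ex_not in Hnot as [z0 Hz0].
    assert (Hp : ~ covers acc (uncovered_point acc)).
    { apply (epsilon_spec (inhabits x0) (fun z => ~ covers acc z)). eauto. }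
    destruct (Hcov _ Hp) as [P [HPF HPp]].
    destruct (Henum _ P (HN P HPF) HPp) as [n Hn].
    destruct (in_split _ _ HPF) as [F1 [F2 ->]].
    destruct (IH (F1 ++ F2) (acc ++ [P])) as [l [Hl1 Hl2]].
    + rewrite length_app in *; simpl in HF; lia.
    + intros Q HQ; apply HN. apply in_app_or in HQ; apply in_or_app; simpl; tauto.
    + intros z Hz. assert (Hacc : ~ covers acc z).
      { intros [Q [HQ HQz]]. apply Hz. exists Q. split; auto. apply in_or_app; auto. }
      destruct (Hcov z Hacc) as [Q [HQ HQz]].
      apply in_app_or in HQ as [HQ|[<-|HQ]].
      * exists Q. split; auto. apply in_or_app; auto.
      * exfalso. apply Hz. exists P. split; auto. apply in_or_app; simpl; auto.
      * exists Q. split; auto. apply in_or_app; simpl; auto.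
    + exists (n :: l). simpl. rewrite Hn. split; auto.
      intros Q HQ. destruct (Hl2 Q HQ) as [H|H].
      * apply in_app_or in H as [H|[<-|[]]]; auto.
      * right. apply in_app_or in H; apply in_or_app; simpl; tauto.
Qed.

End GrowCover.

Lemma mishchenko {X : Type} (N : set X -> Prop) :
  point_countable N ->
  exists C : nat -> list (set X), forall F, (forall P, In P F -> N P) ->
    (forall z, covers F z) ->
    exists c, (forall z, covers (C c) z) /\ forall P, In P (C c) -> In P F.
Proof.
  intros Hpc. destruct (classic (inhabited X)) as [[x0]|Hempty].
  - destruct (choice _ Hpc) as [enum Henum].
    exists (fun c => grow_cover x0 enum [] (list_of_nat c)). intros F HN Hcov.
    assert (enum_onto : forall p P, N P -> P p -> exists j, enum p j = P).
    { intros p P HP Hp. destruct (Henum p P (conj HP Hp)) as [j Hj]; eauto. }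
    destruct (grow_cover_reaches x0 enum N enum_onto (length F) F [])
      as [l [Hl1 Hl2]]; auto.
    exists (nat_of_list l). rewrite list_of_nat_of_list.
    split; auto. intros P HP. destruct (Hl2 P HP) as [[]|H]; auto.
  - exists (fun _ => []). intros F _ _. exists O.
    split; [intros z; destruct (Hempty (inhabits z))|intros P []].
Qed.

Lemma countable_network_of_pytkeev {X : Type} (t : topology X) (N : set X -> Prop) :
  hausdorff t -> countably_compact t -> point_countable N -> pytkeev_network t N ->
  exists M : nat -> set X, forall x O, is_open t O -> O x ->
    exists c, M c x /\ forall z, M c z -> O z.
Proof.
  intros Hh Hcc Hpc Hpyt. destruct (mishchenko N Hpc) as [C HC].
  exists (fun c => nth (snd (of_nat c)) (C (fst (of_nat c))) (fun _ => False)).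
  intros x O HO Hx.
  destruct (pytkeev_refinement t N (fun V => V = O \/ (is_open t V /\ ~ V x)) Hcc Hpc Hpyt)
    as [F [HF Fcov]].
  - intros V [->|[H _]]; auto.
  - intros z. destruct (classic (z = x)) as [->|Hzx]; [eauto|].
    destruct (Hh z x Hzx) as [U [V [HU [HV [HUz [HVx Hd]]]]]].
    exists U. split; auto. right. split; auto. intros HUx. apply (Hd x); auto.
  - destruct (HC F) as [c [Hcov HcF]]; [intros P HP; apply HF; auto|auto|].
    destruct (Hcov x) as [P [HP HPx]].
    destruct (In_nth _ _ (fun _ => False) HP) as [i [_ Hi]].
    exists (to_nat (c, i)). cbv beta. rewrite cancel_of_to. cbn [fst snd]. subst P.
    split; auto.
    destruct (HF _ (HcF _ HP)) as [_ [V [[->|[_ HVx]] HPV]]]; [auto|].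
    exfalso. auto.
Qed.

Definition closed {X : Type} (t : topology X) (C : set X) : Prop :=
  forall z, top_closure t C z -> C z.

Section CompactHausdorff.
Context {X : Type} (t : topology X).
Hypothesis compact_t : top_compact t.
Hypothesis hausdorff_t : hausdorff t.

Lemma compact_hausdorff_regular x W :
  is_open t W -> W x -> exists V, is_open t V /\ V x /\ forall z, top_closure t V z -> W z.
Proof.
  intros HW Hx.
  assert (Hsep : forall y, exists UV : set X * set X,
    is_open t (fst UV) /\ is_open t (snd UV) /\ fst UV x /\ (~ W y -> snd UV y) /\
    forall z, ~ (fst UV z /\ snd UV z)).
  { intros y. destruct (classic (W y)) as [Hy|Hy].
    - exists ((fun _ => True), (fun _ => False)). simpl.
      repeat split; auto using open_full, open_empty. tauto.
    - assert (Hxy : x <> y) by (intros ->; auto).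
      destruct (hausdorff_t x y Hxy) as [U [V [HU [HV [HUx [HVy Hd]]]]]].
      exists (U, V). simpl. repeat split; auto. }
  destruct (choice _ Hsep) as [sep Hsep'].
  destruct (compact_t X (fun y z => W z \/ snd (sep y) z)) as [l Hl].
  - intros y. apply open_or; auto. apply Hsep'.
  - intros y. exists y. destruct (classic (W y)); auto. right. apply Hsep'; auto.
  - exists (fun z => forall y, In y l -> fst (sep y) z). split; [|split].
    + apply open_finite_inter. intros y; apply Hsep'.
    + intros y _. apply Hsep'.
    + intros z Hz. destruct (Hl z) as [y [Hy [HWz|Hyz]]]; auto.
      destruct (Hsep' y) as [_ [HVy [_ [_ Hdisj]]]].
      exfalso. refine (not_closure_of_open_disjoint t _ _ HVy _ z Hyz Hz).
      intros w Hw Hw'. apply (Hdisj w). auto.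
Qed.

Lemma compact_hausdorff_normal C W :
  closed t C -> is_open t W -> (forall z, C z -> W z) ->
  exists V, is_open t V /\ (forall z, C z -> V z) /\ forall z, top_closure t V z -> W z.
Proof.
  intros HC HW HCW.
  assert (Hnbhd : forall y, exists V, is_open t V /\ (C y -> V y) /\
                    forall z, top_closure t V z -> W z).
  { intros y. destruct (classic (C y)) as [Hy|Hy].
    - destruct (compact_hausdorff_regular y W HW (HCW y Hy)) as [V [H1 [H2 H3]]]. eauto.
    - exists (fun _ => False). split; [apply open_empty|split; [tauto|]].
      intros z Hz. destruct (Hz _ (open_full _ t) I) as [w [_ []]]. }
  destruct (choice _ Hnbhd) as [nbhd Hnbhd'].
  assert (HCc : is_open t (fun z => ~ C z)).
  { eapply open_ext; [|apply (open_compl_closure t C)].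
    intros z; split; intros H H'; apply H; auto. apply subset_closure; auto. }
  destruct (compact_t X (fun y z => nbhd y z \/ ~ C z)) as [l Hl].
  - intros y. apply open_or; auto. apply Hnbhd'.
  - intros y. exists y. destruct (classic (C y)); auto. left. apply Hnbhd'; auto.
  - exists (fun z => exists y, In y l /\ nbhd y z). split; [|split].
    + apply open_finite_union. intros; apply Hnbhd'.
    + intros z Hz. destruct (Hl z) as [y [Hy [H|H]]]; [eauto|tauto].
    + intros z Hz. apply NNPP; intros HWz.
      refine (not_closure_of_open_disjoint t _
               (fun w => forall y, In y l -> ~ top_closure t (nbhd y) w) _ _ z _ Hz).
      * apply open_finite_inter. intros; apply open_compl_closure.
      * intros w Hw [y [Hy Hwy]]. apply (Hw y Hy). apply subset_closure; auto.
      * intros y Hy Hzy. apply HWz. apply (Hnbhd' y); auto.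
Qed.

Lemma compact_hausdorff_interpolation :
  exists between : set X -> set X -> set X, forall A B,
    is_open t B -> (forall z, top_closure t A z -> B z) ->
    is_open t (between A B) /\ (forall z, top_closure t A z -> between A B z) /\
    (forall z, top_closure t (between A B) z -> B z).
Proof.
  assert (H : forall AB : set X * set X, exists V,
    is_open t (snd AB) -> (forall z, top_closure t (fst AB) z -> snd AB z) ->
    is_open t V /\ (forall z, top_closure t (fst AB) z -> V z) /\
    (forall z, top_closure t V z -> snd AB z)).
  { intros [A B]. destruct (classic (is_open t B /\ forall z, top_closure t A z -> B z))
      as [[HB HAB]|Hn].
    - destruct (compact_hausdorff_normal (top_closure t A) B (closure_idem t A) HB HAB)
        as [V HV]. eauto.
    - exists B. intros HB HAB. exfalso; auto. }
  destruct (choice _ H) as [between Hbetween].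
  exists (fun A B => between (A, B)). intros A B. apply (Hbetween (A, B)).
Qed.

End CompactHausdorff.

(* [first_index P n] is the least [k < n] with [P k], and [n] if there is none. *)
Fixpoint first_index (P : nat -> Prop) (n : nat) : nat :=
  match n with
  | O => O
  | S m => let r := first_index P m in
           if Nat.ltb r m then r
           else if excluded_middle_informative (P m) then m else S m
  end.

Lemma first_index_spec P n :
  (first_index P n <= n)%nat /\ (forall k, (k < first_index P n)%nat -> ~ P k) /\
  ((first_index P n < n)%nat -> P (first_index P n)).
Proof.
  induction n as [|n [H1 [H2 H3]]]; simpl; [split; [lia|split; intros; lia]|].
  destruct (Nat.ltb (first_index P n) n) eqn:E.
  - apply Nat.ltb_lt in E. split; [lia|split; auto].
  - apply Nat.ltb_ge in E. assert (first_index P n = n) by lia.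
    destruct excluded_middle_informative as [HP|HP]; (split; [lia|split]).
    + intros k Hk. apply H2. lia.
    + auto.
    + intros k Hk. destruct (Nat.eq_dec k n) as [->|Hne]; auto. apply H2; lia.
    + intros; lia.
Qed.

Lemma half_pow_pos n : 0 < (/2) ^ n.
Proof. apply pow_lt. lra. Qed.

Lemma half_pow_le_1 n : (/2) ^ n <= 1.
Proof. induction n; simpl; [lra|]. pose proof (half_pow_pos n). lra. Qed.

Lemma half_pow_small eps : 0 < eps -> exists n, (/2) ^ n < eps.
Proof.
  intros Heps.
  destruct (pow_lt_1_zero (/2) ltac:(rewrite Rabs_pos_eq; lra) eps Heps) as [n Hn].
  exists n. specialize (Hn n (le_n _)).
  rewrite Rabs_pos_eq in Hn; [exact Hn|apply Rlt_le, half_pow_pos].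
Qed.

Lemma dyadic_squeeze (g : nat -> R) :
  (forall n, g (S n) <= g n <= g (S n) + (/2) ^ S n) ->
  exists f, forall n, g n - (/2) ^ n <= f <= g n.
Proof.
  intros Hg.
  assert (g_dec : forall n m, (n <= m)%nat -> g m <= g n).
  { intros n m Hnm. induction Hnm; [lra|]. pose proof (Hg m). lra. }
  assert (low_inc : forall n m, (n <= m)%nat -> g n - (/2) ^ n <= g m - (/2) ^ m).
  { intros n m Hnm. induction Hnm; [lra|]. pose proof (Hg m). simpl in *. lra. }
  assert (low_le : forall n m, g m - (/2) ^ m <= g n).
  { intros n m. pose proof (low_inc m (max n m) ltac:(lia)).
    pose proof (g_dec n (max n m) ltac:(lia)). pose proof (half_pow_pos (max n m)). lra. }
  destruct (completeness (fun r => exists n, r = g n - (/2) ^ n)) as [f [Hub Hleast]].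
  - exists (g O). intros r [n ->]. apply low_le.
  - exists (g O - (/2) ^ 0). eauto.
  - exists f. intros n. split; [apply Hub; eauto|].
    apply Hleast. intros r [m ->]. apply low_le.
Qed.

Lemma Rabs_le_inv x b : Rabs x <= b -> - b <= x <= b.
Proof. unfold Rabs; destruct Rcase_abs; lra. Qed.

Definition continuous {X : Type} (t : topology X) (f : X -> R) : Prop :=
  forall x eps, 0 < eps ->
    exists V, is_open t V /\ V x /\ forall y, V y -> Rabs (f y - f x) < eps.

(* [L n k] is the open set attached to the dyadic [k / 2^n]; the Urysohn
   function is the limit of [level n x / 2^n], where [level n x] indexes the
   first set of level [n] containing [x]. *)
Section DyadicScale.
Context {X : Type} (t : topology X) (C W : set X) (L : nat -> nat -> set X).
Hypothesis scale_open : forall n k, (k <= 2 ^ n)%nat -> is_open t (L n k).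
Hypothesis scale_bottom : forall z, C z -> L O O z.
Hypothesis scale_top : forall z, L O 1%nat z <-> W z.
Hypothesis scale_refine :
  forall n k, (k <= 2 ^ n)%nat -> forall z, L (S n) (2 * k)%nat z <-> L n k z.
Hypothesis scale_closure :
  forall n k, (k < 2 ^ n)%nat -> forall z, top_closure t (L n k) z -> L n (S k) z.

Lemma scale_mono n k k' z :
  (k <= k')%nat -> (k' <= 2 ^ n)%nat -> L n k z -> L n k' z.
Proof.
  intros Hk Hk'. induction k' as [|k' IH]; intros Hz.
  - replace k with O in Hz by lia; auto.
  - destruct (Nat.eq_dec k (S k')) as [<-|Hne]; auto.
    apply scale_closure; [lia|]. apply subset_closure. apply IH; auto; lia.
Qed.

Lemma scale_odd n k z :
  (k < 2 ^ n)%nat -> L (S n) (S (2 * k)) z -> L n (S k) z.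
Proof.
  intros Hk Hz. apply (scale_refine n (S k)); [lia|].
  replace (2 * S k)%nat with (S (S (2 * k))) by lia.
  apply scale_closure; [simpl; lia|]. apply subset_closure; auto.
Qed.

Lemma scale_top_level n z : L n (2 ^ n)%nat z <-> W z.
Proof.
  revert z. induction n; intros z; [apply scale_top|]. rewrite <- IHn.
  change (2 ^ S n)%nat with (2 * 2 ^ n)%nat. apply scale_refine; lia.
Qed.

Definition level n x := first_index (fun k => L n k x) (S (2 ^ n)).

Lemma level_le n x : (level n x <= S (2 ^ n))%nat.
Proof. apply first_index_spec. Qed.

Lemma not_scale_below_level n x k : (k < level n x)%nat -> ~ L n k x.
Proof. apply first_index_spec. Qed.

Lemma scale_at_level n x : (level n x <= 2 ^ n)%nat -> L n (level n x) x.
Proof. intros H. apply (proj2 (proj2 (first_index_spec (fun k => L n k x) _))). unfold level in *; lia. Qed.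

Lemma level_le_of_scale n x k : L n k x -> (level n x <= k)%nat.
Proof.
  intros Hk. destruct (Nat.le_gt_cases (level n x) k) as [H|H]; auto.
  exfalso; apply (not_scale_below_level n x k); auto.
Qed.

Lemma level_gt_of_not_scale n x k :
  ~ L n k x -> (k <= 2 ^ n)%nat -> (k < level n x)%nat.
Proof.
  intros Hk Hkn. destruct (Nat.le_gt_cases (level n x) k) as [H|H]; auto.
  exfalso; apply Hk. apply scale_mono with (level n x); auto. apply scale_at_level; lia.
Qed.

Lemma level_succ_le n x : (level (S n) x <= 2 * level n x)%nat.
Proof.
  destruct (Nat.le_gt_cases (level n x) (2 ^ n)) as [H|H].
  - apply level_le_of_scale. apply scale_refine; auto. apply scale_at_level; auto.
  - pose proof (level_le (S n) x). change (2 ^ S n)%nat with (2 * 2 ^ n)%nat in *. lia.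
Qed.

Lemma level_succ_ge n x : (2 * level n x <= S (level (S n) x))%nat.
Proof.
  pose proof (level_le (S n) x) as Hb. change (2 ^ S n)%nat with (2 * 2 ^ n)%nat in *.
  destruct (Nat.le_gt_cases (level (S n) x) (2 * 2 ^ n)) as [H|H].
  - pose proof (scale_at_level (S n) x H) as HL.
    destruct (Nat.Even_or_Odd (level (S n) x)) as [[k Hk]|[k Hk]]; rewrite Hk in *.
    + apply (scale_refine n k ltac:(lia) x) in HL. pose proof (level_le_of_scale n x k HL). lia.
    + replace (2 * k + 1)%nat with (S (2 * k)) in * by lia.
      apply scale_odd in HL; [|lia]. pose proof (level_le_of_scale n x (S k) HL). lia.
  - assert (HnW : ~ W x).
    { rewrite <- (scale_top_level (S n)). apply not_scale_below_level.
      change (2 ^ S n)%nat with (2 * 2 ^ n)%nat. lia. }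
    rewrite <- (scale_top_level n) in HnW.
    pose proof (level_gt_of_not_scale n x _ HnW (le_n _)). pose proof (level_le n x). lia.
Qed.

(* [x] lies in the open set [L n (level n x)] and outside the closure of
   [L n (level n x - 2)]. *)
Lemma level_locally_stable n x : exists V, is_open t V /\ V x /\
  forall y, V y -> (level n y <= level n x <= S (level n y))%nat.
Proof.
  set (c := level n x).
  exists (fun y => ((c <= 2 ^ n)%nat -> L n c y) /\
                   ((2 <= c)%nat -> ~ top_closure t (L n (c - 2)%nat) y)).
  split; [|split].
  - apply (open_inter _ t).
    + destruct (classic (c <= 2 ^ n)%nat).
      * eapply open_ext; [|apply (scale_open n c); auto]. intros z; tauto.
      * eapply open_ext; [|apply (open_full _ t)]. intros z; tauto.
    + destruct (classic (2 <= c)%nat).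
      * eapply open_ext; [|apply (open_compl_closure t (L n (c - 2)%nat))]. intros z; tauto.
      * eapply open_ext; [|apply (open_full _ t)]. intros z; tauto.
  - split; [apply scale_at_level|].
    intros Hc Hcl. apply (not_scale_below_level n x (c - 1)%nat); [unfold c; lia|].
    replace (c - 1)%nat with (S (c - 2)) by lia. apply scale_closure; auto.
    pose proof (level_le n x). unfold c in *. lia.
  - intros y [Hy1 Hy2]. split.
    + destruct (Nat.le_gt_cases c (2 ^ n)) as [H|H].
      * apply level_le_of_scale; auto.
      * pose proof (level_le n y). pose proof (level_le n x). unfold c in *. lia.
    + destruct (Nat.le_gt_cases 2 c) as [H|H]; [|lia].
      assert (Hout : ~ L n (c - 2)%nat y)
        by (intros HL; apply (Hy2 H); apply subset_closure; auto).
      pose proof (level_le n x).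
      pose proof (level_gt_of_not_scale n y (c - 2)%nat Hout ltac:(unfold c in *; lia)). lia.
Qed.

Definition approx n x := INR (level n x) * (/2) ^ n.

Lemma approx_step n x :
  approx (S n) x <= approx n x <= approx (S n) x + (/2) ^ S n.
Proof.
  unfold approx. rewrite <- !tech_pow_Rmult. pose proof (half_pow_pos n).
  pose proof (le_INR _ _ (level_succ_le n x)) as H1.
  pose proof (le_INR _ _ (level_succ_ge n x)) as H2.
  rewrite !mult_INR in H1, H2. rewrite (S_INR (level (S n) x)) in H2.
  replace (INR 2) with 2 in H1, H2 by (simpl; lra).
  set (q := (/2) ^ n) in *.
  assert (0 <= (2 * INR (level n x) - INR (level (S n) x)) * q) by (apply Rmult_le_pos; lra).
  assert (0 <= (INR (level (S n) x) + 1 - 2 * INR (level n x)) * q)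
    by (apply Rmult_le_pos; lra).
  split; nra.
Qed.

Lemma approx_locally_close n x : exists V, is_open t V /\ V x /\
  forall y, V y -> Rabs (approx n y - approx n x) <= (/2) ^ n.
Proof.
  destruct (level_locally_stable n x) as [V [HV [HVx Hlev]]].
  exists V. split; [|split]; auto. intros y Hy.
  destruct (Hlev y Hy) as [H1 H2]. apply le_INR in H1. apply le_INR in H2.
  rewrite S_INR in H2. unfold approx. pose proof (half_pow_pos n).
  apply Rabs_le. split; nra.
Qed.

Lemma dyadic_scale_function : exists f : X -> R, continuous t f /\
  (forall x, Rabs (f x) <= 2) /\ (forall x, C x -> f x <= 0) /\
  (forall x, ~ W x -> 1 <= f x).
Proof.
  destruct (choice (fun x f => forall n, approx n x - (/2) ^ n <= f <= approx n x))
    as [f Hf].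
  { intros x. apply dyadic_squeeze. intros n. apply approx_step. }
  assert (approx0 : forall x, approx O x = INR (level O x)).
  { intros x. unfold approx. simpl. ring. }
  exists f. split; [|split; [|split]].
  - intros x eps Heps. destruct (half_pow_small (eps / 3)) as [n Hn]; [lra|].
    destruct (approx_locally_close n x) as [V [HV [HVx Hclose]]].
    exists V. split; [|split]; auto. intros y Hy.
    pose proof (Hclose y Hy) as Hc. apply Rabs_le_inv in Hc.
    pose proof (Hf x n). pose proof (Hf y n). apply Rabs_def1; lra.
  - intros x. pose proof (Hf x O) as H. rewrite approx0 in H. simpl in H.
    pose proof (le_INR _ _ (level_le O x)) as Hle. simpl in Hle.
    pose proof (pos_INR (level O x)). apply Rabs_le. lra.
  - intros x Hx. pose proof (Hf x O) as H. rewrite approx0 in H.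
    assert (Hlev : level O x = O)
      by (pose proof (level_le_of_scale O x O (scale_bottom x Hx)); lia).
    rewrite Hlev in H. simpl in H. lra.
  - intros x Hx. pose proof (Hf x O) as H. rewrite approx0 in H.
    assert (Hlev : level O x = 2%nat).
    { assert (Hout : ~ L O 1%nat x) by (rewrite scale_top; auto).
      pose proof (level_gt_of_not_scale O x 1%nat Hout ltac:(simpl; lia)).
      pose proof (level_le O x). simpl in *. lia. }
    rewrite Hlev in H. simpl in H. lra.
Qed.

End DyadicScale.

Section DyadicFamily.
Context {X : Type} (t : topology X) (between : set X -> set X -> set X) (V0 W : set X).

(* Indices beyond [2 ^ n] are junk. *)
Fixpoint dyadic_family (n k : nat) : set X :=
  match n with
  | O => match k with O => V0 | 1%nat => W | _ => fun _ => True end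
  | S n' => if Nat.even k then dyadic_family n' (Nat.div2 k)
            else between (dyadic_family n' (Nat.div2 k)) (dyadic_family n' (S (Nat.div2 k)))
  end.

Lemma dyadic_family_even n k : dyadic_family (S n) (2 * k)%nat = dyadic_family n k.
Proof.
  cbn [dyadic_family]. rewrite Nat.even_even, Nat.div2_double. reflexivity.
Qed.

Lemma dyadic_family_odd n k :
  dyadic_family (S n) (S (2 * k)) = between (dyadic_family n k) (dyadic_family n (S k)).
Proof.
  cbn [dyadic_family]. replace (S (2 * k)) with (2 * k + 1)%nat by lia.
  rewrite Nat.even_odd. replace (2 * k + 1)%nat with (S (2 * k)) by lia.
  rewrite Nat.div2_succ_double. reflexivity.
Qed.

Hypothesis between_spec : forall A B, is_open t B -> (forall z, top_closure t A z -> B z) ->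
  is_open t (between A B) /\ (forall z, top_closure t A z -> between A B z) /\
  (forall z, top_closure t (between A B) z -> B z).
Hypothesis V0_open : is_open t V0.
Hypothesis W_open : is_open t W.
Hypothesis V0_closure : forall z, top_closure t V0 z -> W z.

Lemma dyadic_family_scale n :
  (forall k, (k <= 2 ^ n)%nat -> is_open t (dyadic_family n k)) /\
  (forall k, (k < 2 ^ n)%nat ->
     forall z, top_closure t (dyadic_family n k) z -> dyadic_family n (S k) z).
Proof.
  induction n as [|n [IHopen IHcl]].
  - split; intros k Hk; simpl in Hk.
    + destruct k as [|[|k]]; [auto|auto|lia].
    + replace k with O by lia. exact V0_closure.
  - change (2 ^ S n)%nat with (2 * 2 ^ n)%nat.
    assert (Hmid : forall j, (j < 2 ^ n)%nat -> _) by (intros j Hj;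
      exact (between_spec (dyadic_family n j) _ (IHopen (S j) Hj) (IHcl j Hj))).
    split; intros k Hk; destruct (Nat.Even_or_Odd k) as [[j ->]|[j ->]];
      rewrite ?Nat.add_1_r in *.
    + rewrite dyadic_family_even. apply IHopen. lia.
    + rewrite dyadic_family_odd. apply Hmid. lia.
    + rewrite dyadic_family_even, dyadic_family_odd. apply Hmid. lia.
    + replace (S (S (2 * j))) with (2 * S j)%nat by lia.
      rewrite dyadic_family_odd, dyadic_family_even. apply Hmid. lia.
Qed.

End DyadicFamily.

Lemma urysohn {X : Type} (t : topology X) :
  top_compact t -> hausdorff t ->
  forall C W, closed t C -> is_open t W -> (forall z, C z -> W z) ->
  exists f : X -> R, continuous t f /\ (forall x, Rabs (f x) <= 2) /\
    (forall x, C x -> f x <= 0) /\ (forall x, ~ W x -> 1 <= f x).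
Proof.
  intros Hc Hh C W HC HW HCW.
  destruct (compact_hausdorff_normal t Hc Hh C W HC HW HCW) as [V0 [HV0 [HCV0 HV0W]]].
  destruct (compact_hausdorff_interpolation t Hc Hh) as [between Hbetween].
  pose proof (dyadic_family_scale t between V0 W Hbetween HV0 HW HV0W) as Hscale.
  apply (dyadic_scale_function t C W (dyadic_family between V0 W)).
  - intros n k. apply Hscale.
  - exact HCV0.
  - intros z. simpl. tauto.
  - intros n k _ z. rewrite dyadic_family_even. tauto.
  - intros n k. apply Hscale.
Qed.

Lemma urysohn_sets {X : Type} (t : topology X) :
  top_compact t -> hausdorff t -> forall A B : set X,
  exists f : X -> R, continuous t f /\ (forall x, Rabs (f x) <= 2) /\
    ((forall z, ~ (top_closure t A z /\ top_closure t B z)) ->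
     (forall z, A z -> f z <= 0) /\ (forall z, B z -> 1 <= f z)).
Proof.
  intros Hc Hh A B.
  destruct (classic (forall z, ~ (top_closure t A z /\ top_closure t B z))) as [Hd|Hd].
  - destruct (urysohn t Hc Hh (top_closure t A) (fun z => ~ top_closure t B z)
                (closure_idem t _) (open_compl_closure t _)) as [f [H1 [H2 [H3 H4]]]].
    { intros z Hz Hz'. apply (Hd z); auto. }
    exists f. repeat split; auto.
    + intros z Hz. apply H3, subset_closure; auto.
    + intros z Hz. apply H4. intros Hn; apply Hn, subset_closure; auto.
  - exists (fun _ => 0). split; [|split; [intros; rewrite Rabs_R0; lra|tauto]].
    intros x eps Heps. exists (fun _ => True). split; [apply open_full|split; auto].
    intros y _. rewrite Rminus_diag, Rabs_R0. auto.
Qed.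

(* For each pair of network members with disjoint closures take a Urysohn
   function; distinct points lie in such a pair by regularity. *)
Lemma separating_functions {X : Type} (t : topology X) (M : nat -> set X) :
  top_compact t -> hausdorff t ->
  (forall x O, is_open t O -> O x -> exists c, M c x /\ forall z, M c z -> O z) ->
  exists F : nat -> X -> R, (forall n, continuous t (F n)) /\
    (forall n x, Rabs (F n x) <= 2) /\
    (forall x y, x <> y -> exists n, F n x <> F n y).
Proof.
  intros Hc Hh HM.
  assert (Hex := fun p => urysohn_sets t Hc Hh (M (fst (of_nat p))) (M (snd (of_nat p)))).
  destruct (choice _ Hex) as [F HF].
  exists F. split; [intros; apply HF|split; [intros; apply HF|]].
  intros x y Hxy.
  destruct (Hh x y Hxy) as [U [V [HU [HV [HUx [HVy Hd]]]]]].
  destruct (compact_hausdorff_regular t Hc Hh x U HU HUx) as [U' [HU' [HU'x HU'c]]].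
  destruct (compact_hausdorff_regular t Hc Hh y V HV HVy) as [V' [HV' [HV'y HV'c]]].
  destruct (HM x U' HU' HU'x) as [j [Hjx HjU]].
  destruct (HM y V' HV' HV'y) as [k [Hky HkV]].
  exists (to_nat (j, k)).
  destruct (HF (to_nat (j, k))) as [_ [_ Hsep]]. rewrite cancel_of_to in Hsep.
  destruct Hsep as [H1 H2].
  - intros z [Hz1 Hz2]. apply (Hd z). split.
    + apply HU'c. apply (closure_mono t (M j) U' HjU); auto.
    + apply HV'c. apply (closure_mono t (M k) V' HkV); auto.
  - pose proof (H1 x Hjx). pose proof (H2 y Hky). lra.
Qed.

Lemma half_pow_le n m : (n <= m)%nat -> (/2) ^ m <= (/2) ^ n.
Proof.
  intros H. replace m with (n + (m - n))%nat by lia. rewrite pow_add.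
  pose proof (half_pow_le_1 (m - n)). pose proof (half_pow_pos n). nra.
Qed.

Section MetricFromFunctions.
Context {X : Type} (t : topology X) (F : nat -> X -> R) (B : R).
Hypothesis countably_compact_t : countably_compact t.
Hypothesis F_continuous : forall n, continuous t (F n).
Hypothesis F_bounded : forall n x, Rabs (F n x) <= B.
Hypothesis F_separating : forall x y, x <> y -> exists n, F n x <> F n y.

Definition weighted_gap x y n := (/2) ^ n * Rabs (F n x - F n y).

Lemma weighted_gap_bound x y n : 0 <= weighted_gap x y n <= (/2) ^ n * (2 * B).
Proof.
  unfold weighted_gap. pose proof (half_pow_pos n). pose proof (Rabs_pos (F n x - F n y)).
  assert (Rabs (F n x - F n y) <= 2 * B).
  { unfold Rminus. eapply Rle_trans; [apply Rabs_triang|]. rewrite Rabs_Ropp.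
    pose proof (F_bounded n x). pose proof (F_bounded n y). lra. }
  split; nra.
Qed.

Lemma weighted_gaps_lub : exists d : X -> X -> R,
  forall x y, is_lub (fun r => exists n, r = weighted_gap x y n) (d x y).
Proof.
  apply (choice (fun x g => forall y, is_lub (fun r => exists n, r = weighted_gap x y n) (g y))).
  intros x. apply (choice (fun y r => is_lub (fun r => exists n, r = weighted_gap x y n) r)).
  intros y.
  destruct (completeness (fun r => exists n, r = weighted_gap x y n)) as [d Hd].
  - exists (2 * B). intros r [n ->]. pose proof (weighted_gap_bound x y n).
    pose proof (half_pow_le_1 n). pose proof (half_pow_pos n). nra.
  - exists (weighted_gap x y O). eauto.
  - eauto.
Qed.

Variable d : X -> X -> R.
Hypothesis d_lub : forall x y, is_lub (fun r => exists n, r = weighted_gap x y n) (d x y).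

Lemma weighted_gap_le_dist x y n : weighted_gap x y n <= d x y.
Proof. apply (d_lub x y). eauto. Qed.

Lemma dist_le x y b : (forall n, weighted_gap x y n <= b) -> d x y <= b.
Proof. intros H. apply (d_lub x y). intros r [n ->]. auto. Qed.

Lemma dist_nonneg x y : 0 <= d x y.
Proof.
  eapply Rle_trans; [|apply (weighted_gap_le_dist x y O)]. apply weighted_gap_bound.
Qed.

Lemma dist_eq0 x y : d x y = 0 -> x = y.
Proof.
  intros H. apply NNPP; intros Hxy. destruct (F_separating x y Hxy) as [n Hn].
  pose proof (weighted_gap_le_dist x y n). pose proof (half_pow_pos n).
  assert (0 < Rabs (F n x - F n y)) by (apply Rabs_pos_lt; lra).
  unfold weighted_gap in *. nra.
Qed.

Lemma dist_is_metric : is_metric d.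
Proof.
  split; [exact dist_nonneg|split; [|split]].
  - intros x y; split; [apply dist_eq0|intros ->].
    apply Rle_antisym; [|apply dist_nonneg]. apply dist_le. intros n.
    unfold weighted_gap. rewrite Rminus_diag, Rabs_R0. lra.
  - assert (forall x y, d x y <= d y x).
    { intros x y. apply dist_le. intros n. unfold weighted_gap.
      rewrite Rabs_minus_sym. apply weighted_gap_le_dist. }
    intros x y. apply Rle_antisym; auto.
  - intros x y z. apply dist_le. intros n.
    pose proof (weighted_gap_le_dist x y n). pose proof (weighted_gap_le_dist y z n).
    pose proof (half_pow_pos n). unfold weighted_gap in *.
    pose proof (Rabs_triang (F n x - F n y) (F n y - F n z)) as Htri.
    replace (F n x - F n y + (F n y - F n z)) with (F n x - F n z) in Htri by ring.
    nra.
Qed.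

(* Finitely many [F n] are close to their value at [x] on a neighbourhood; the
   weights [2^-n] make the remaining terms uniformly small. *)
Lemma dist_small_near x r : 0 < r ->
  exists V, is_open t V /\ V x /\ forall y, V y -> d x y < r.
Proof.
  intros Hr. pose (K := 2 * Rabs B + 1).
  assert (HK : 0 < K) by (pose proof (Rabs_pos B); unfold K; lra).
  destruct (half_pow_small (r / 2 / K)) as [J HJ]; [apply Rdiv_lt_0_compat; lra|].
  assert (HJK : (/2) ^ J * K < r / 2).
  { apply (Rmult_lt_compat_r K) in HJ; auto. unfold Rdiv in HJ.
    rewrite Rmult_assoc, Rinv_l in HJ; lra. }
  destruct (choice (fun n V => is_open t V /\ V x /\
              forall y, V y -> Rabs (F n y - F n x) < r / 2)) as [Vn HVn].
  { intros n. apply F_continuous. lra. }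
  exists (fun y => forall n, In n (seq 0 J) -> Vn n y). split; [|split].
  - apply open_finite_inter. intros n; apply HVn.
  - intros n _. apply HVn.
  - intros y Hy. apply Rle_lt_trans with (r / 2); [|lra]. apply dist_le. intros n.
    destruct (Compare_dec.lt_dec n J) as [HnJ|HnJ].
    + pose proof (proj2 (proj2 (HVn n)) y (Hy n ltac:(apply in_seq; lia))).
      unfold weighted_gap. rewrite Rabs_minus_sym.
      pose proof (half_pow_le_1 n). pose proof (half_pow_pos n).
      pose proof (Rabs_pos (F n y - F n x)). nra.
    + pose proof (weighted_gap_bound x y n). pose proof (half_pow_le J n ltac:(lia)).
      pose proof (half_pow_pos n). pose proof (Rabs_pos B).
      assert (B <= Rabs B) by apply Rle_abs. unfold K in HJK. nra.
Qed.

Lemma open_of_metric_open U : metric_open d U -> is_open t U.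
Proof.
  intros HU.
  eapply open_ext; [|apply (open_union _ t (fun V => is_open t V /\ forall y, V y -> U y))].
  - intros x; split; [intros [V [[_ HV] Hx]]; auto|].
    intros Hx. destruct (HU x Hx) as [eps [Heps Hball]].
    destruct (dist_small_near x eps Heps) as [V [HV [HVx HVd]]].
    exists V. split; auto.
  - intros V [H _]; auto.
Qed.

(* The open sets [U ∪ {y | 1/(n+1) < d x y}] cover [X]; a finite subcover
   yields a ball around [x] inside [U]. *)
Lemma metric_open_of_open U : is_open t U -> metric_open d U.
Proof.
  intros HU x Hx.
  assert (Hfar : forall r, is_open t (fun y => r < d x y)).
  { intros r. apply open_of_metric_open. intros y Hy. exists (d x y - r). split; [lra|].
    intros z Hz. destruct dist_is_metric as [_ [_ [Hsym Htri]]].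
    pose proof (Htri x z y). rewrite (Hsym z y) in H. lra. }
  destruct (countably_compact_t (fun n y => U y \/ / (INR n + 1) < d x y)) as [m Hm].
  - intros n. apply open_or; auto.
  - intros y. destruct (classic (U y)) as [Hy|Hy]; [exists O; auto|].
    assert (Hd : 0 < d x y).
    { destruct (Rle_lt_or_eq_dec 0 (d x y) (dist_nonneg x y)) as [H|H]; auto.
      exfalso. apply Hy. rewrite <- (dist_eq0 x y); auto. }
    destruct (archimed_cor1 _ Hd) as [N [HN1 HN2]].
    exists N. right. apply Rle_lt_trans with (/ INR N); auto.
    apply Rinv_le_contravar; [apply lt_0_INR; auto|lra].
  - exists (/ (INR m + 1)). split; [apply Rinv_0_lt_compat; pose proof (pos_INR m); lra|].
    intros y Hy. destruct (Hm y) as [n [Hn [HUy|Hlt]]]; auto.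
    exfalso. assert (/ (INR m + 1) <= / (INR n + 1)).
    { apply Rinv_le_contravar; [pose proof (pos_INR n); lra|].
      apply le_INR in Hn. lra. }
    lra.
Qed.

End MetricFromFunctions.

Lemma metrizable_of_separating_functions {X : Type} (t : topology X)
    (F : nat -> X -> R) (B : R) :
  countably_compact t -> (forall n, continuous t (F n)) ->
  (forall n x, Rabs (F n x) <= B) -> (forall x y, x <> y -> exists n, F n x <> F n y) ->
  metrizable t.
Proof.
  intros Hcc Hcont Hbd Hsep. destruct (weighted_gaps_lub F B Hbd) as [d Hd].
  exists d. split; [apply (dist_is_metric F B Hbd Hsep d Hd)|].
  intros U; split.
  - apply (metric_open_of_open t F B Hcc Hcont Hbd Hsep d Hd).
  - apply (open_of_metric_open t F B Hcont Hbd d Hd).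
Qed.

Theorem theorem3p18 (X : Type) (t : topology X) :
  hausdorff t -> countably_compact t ->
  (exists N : set X -> Prop, point_countable N /\ pytkeev_network t N) ->
  top_compact t /\ metrizable t.
Proof.
  intros Hh Hcc [N [Hpc Hpyt]].
  assert (Hc : top_compact t) by exact (compact_of_pytkeev t N Hcc Hpc Hpyt).
  split; [exact Hc|].
  destruct (countable_network_of_pytkeev t N Hh Hcc Hpc Hpyt) as [M HM].
  destruct (separating_functions t M Hc Hh HM) as [F [HFc [HFb HFs]]].
  exact (metrizable_of_separating_functions t F 2 Hcc HFc HFb HFs).
Qed.
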